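(* Let $1<p<2<r<\infty$ with $r'<p$, where $q'=q/(q-1)$. Let $(k_n)$ be a sequence of positive integers such that for all $n\ge1$ \[1+2\sum_{i=1}^{n-1}i^{r/2}k_i^{r/2}\le k_n^{1-p/2}\big/n^{p/2}\quad\text{and}\quad\Big(\frac{n+1}{n}\Big)^{r/2}\Big(\frac{k_n}{k_{n+1}}\Big)^{(1/p-1/p')r/2}\le\frac12,\] and put $\alpha_n=\sqrt n\,k_n^{(1/p'-1/p)/2}$. Then for all $l,j\in\mathbb N$ with \[2\sum_{i=1}^{l-1}i^{r/2}k_i^{r/2}\le j\le k_l^{1-p/2}\big/l^{p/2},\] and all real $x_1,\dots,x_l$ with $0\le x_i\le k_i$ for $1\le i<l$ and $0\le x_l\le j-\sum_{i=1}^{l-1}x_i$, we have \[0\le\sum_{i=1}^l\alpha_i^r x_i^{r/p}\le\frac j2+2.\] *)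

From Stdlib Require Import Reals Lra.
Open Scope R_scope.

(* Real power x^y for x >= 0: Rpower x y for x > 0, and 0 for x <= 0.
   Used only with strictly positive exponents, where 0^y = 0 is the
   standard convention (Stdlib's Rpower 0 y would give 1). *)
Definition rpow (x y : R) : R := if Rle_dec x 0 then 0 else Rpower x y.

Fixpoint ssum (f : nat -> R) (n : nat) : R :=
  match n with
  | O => 0
  | S m => ssum f m + f (S m)
  end.

Definition conj_exp (q : R) : R := q / (q - 1).

Definition alpha (p : R) (k : nat -> nat) (n : nat) : R :=
  sqrt (INR n) * rpow (INR (k n)) ((1 / conj_exp p - 1 / p) / 2).

(** Since 1/p' - 1/p = 1 - 2/p, the i-th term factors as
    α_i^r x^{r/p} = (i k_i)^{r/2} (x/k_i)^{r/p}.  For i < l the constraint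
    x_i <= k_i bounds it by (i k_i)^{r/2}, so these terms add up to at most j/2.
    For the last term, x_l <= j <= k_l^{1-p/2} / l^{p/2} says exactly
    x_l/k_l <= (l k_l)^{-p/2}, so it is at most 1. *)

From Stdlib Require Import Reals Lra Lia.
Open Scope R_scope.

Lemma rpow_Rpower (x a : R) : 0 < x -> rpow x a = Rpower x a.
Proof. intro Hx; unfold rpow; destruct (Rle_dec x 0); [lra | reflexivity]. Qed.

Lemma rpow_0_l (a : R) : rpow 0 a = 0.
Proof. unfold rpow; destruct (Rle_dec 0 0); [reflexivity | lra]. Qed.

Lemma rpow_ge0 (x a : R) : 0 <= rpow x a.
Proof.
  unfold rpow; destruct (Rle_dec x 0); [lra | left; apply exp_pos].
Qed.

Lemma rpow_gt0 (x a : R) : 0 < x -> 0 < rpow x a.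
Proof. intro Hx; rewrite rpow_Rpower by exact Hx; apply exp_pos. Qed.

Lemma rpow_1_l (a : R) : rpow 1 a = 1.
Proof.
  rewrite rpow_Rpower by lra.
  unfold Rpower; rewrite ln_1, Rmult_0_r; apply exp_0.
Qed.

Lemma rpow_1 (x : R) : 0 < x -> rpow x 1 = x.
Proof. intro Hx; rewrite rpow_Rpower by exact Hx; apply Rpower_1, Hx. Qed.

Lemma rpow_plus (x a b : R) : 0 < x -> rpow x (a + b) = rpow x a * rpow x b.
Proof. intro Hx; rewrite !rpow_Rpower by exact Hx; apply Rpower_plus. Qed.

Lemma rpow_Ropp (x a : R) : 0 < x -> rpow x (- a) = / rpow x a.
Proof. intro Hx; rewrite !rpow_Rpower by exact Hx; apply Rpower_Ropp. Qed.

Lemma rpow_Rinv (x a : R) : 0 < x -> rpow (/ x) a = / rpow x a.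
Proof.
  intro Hx; rewrite <- rpow_Ropp, !rpow_Rpower by (auto with real).
  unfold Rpower; rewrite ln_Rinv by exact Hx; f_equal; ring.
Qed.

Lemma rpow_mult_distr (x y a : R) :
  0 <= x -> 0 <= y -> rpow (x * y) a = rpow x a * rpow y a.
Proof.
  intros [Hx | <-] [Hy | <-];
    try (rewrite ?Rmult_0_l, ?Rmult_0_r, !rpow_0_l; ring).
  rewrite !rpow_Rpower by (try apply Rmult_lt_0_compat; assumption).
  symmetry; apply Rpower_mult_distr; assumption.
Qed.

Lemma rpow_mult (x a b : R) : 0 <= x -> rpow (rpow x a) b = rpow x (a * b).
Proof.
  intros [Hx | <-]; [| rewrite !rpow_0_l; reflexivity].
  rewrite !(rpow_Rpower x), rpow_Rpower by (try apply exp_pos; exact Hx).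
  apply Rpower_mult.
Qed.

Lemma rpow_sqrt (x : R) : 0 <= x -> rpow x (/ 2) = sqrt x.
Proof.
  intros [Hx | <-]; [| rewrite rpow_0_l, sqrt_0; reflexivity].
  rewrite rpow_Rpower by exact Hx; apply Rpower_sqrt, Hx.
Qed.

Lemma rpow_le_compat (x y a : R) : 0 <= a -> 0 <= x <= y -> rpow x a <= rpow y a.
Proof.
  intros Ha [[Hx | <-] Hxy]; [| rewrite rpow_0_l; apply rpow_ge0].
  rewrite !rpow_Rpower by lra; apply Rle_Rpower_l; lra.
Qed.

Lemma ssum_le (f g : nat -> R) (n : nat) :
  (forall i, (1 <= i)%nat -> (i <= n)%nat -> f i <= g i) -> ssum f n <= ssum g n.
Proof.
  induction n as [|n IH]; intro Hfg; simpl; [lra |].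
  assert (ssum f n <= ssum g n) by (apply IH; intros; apply Hfg; lia).
  assert (f (S n) <= g (S n)) by (apply Hfg; lia).
  lra.
Qed.

Lemma ssum_ge0 (f : nat -> R) (n : nat) :
  (forall i, (1 <= i)%nat -> (i <= n)%nat -> 0 <= f i) -> 0 <= ssum f n.
Proof.
  intro Hf; apply Rle_trans with (ssum (fun _ => 0) n).
  - clear Hf; induction n as [|n IH]; simpl; lra.
  - apply ssum_le, Hf.
Qed.

Lemma inv_conj_exp (p : R) : p <> 0 -> p <> 1 -> 1 / conj_exp p = 1 - 1 / p.
Proof. intros Hp0 Hp1; unfold conj_exp; field; split; [exact Hp0 | lra]. Qed.

Section AlphaTerm.

Variables (p r : R) (k : nat -> nat).
Hypotheses (Hp0 : 0 < p) (Hp1 : p <> 1) (Hr : 0 <= r).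

Let Hrp : 0 <= r / p.
Proof. apply Rmult_le_pos; [exact Hr | apply Rlt_le, Rinv_0_lt_compat, Hp0]. Qed.

Lemma alpha_term (i : nat) (y : R) :
  0 < INR (k i) -> 0 <= y ->
  rpow (alpha p k i) r * rpow y (r / p)
  = rpow (INR i * INR (k i)) (r / 2) * rpow (y / INR (k i)) (r / p).
Proof.
  intros Hk Hy.
  assert (Hi : 0 <= INR i) by apply pos_INR.
  unfold alpha.
  rewrite rpow_mult_distr by (apply sqrt_pos || apply rpow_ge0).
  rewrite <- rpow_sqrt, !rpow_mult by lra.
  rewrite inv_conj_exp by lra.
  replace (/ 2 * r) with (r / 2) by field.
  replace ((1 - 1 / p - 1 / p) / 2 * r) with (r / 2 + - (r / p)) by (field; lra).
  rewrite rpow_plus, rpow_Ropp by exact Hk.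
  change (y / INR (k i)) with (y * / INR (k i)).
  rewrite !rpow_mult_distr, rpow_Rinv by (auto with real).
  ring.
Qed.

Lemma alpha_term_le_block (i : nat) (y : R) :
  0 < INR (k i) -> 0 <= y <= INR (k i) ->
  rpow (alpha p k i) r * rpow y (r / p)
  <= rpow (INR i) (r / 2) * rpow (INR (k i)) (r / 2).
Proof.
  intros Hk Hy.
  assert (Hyk : 0 <= y / INR (k i) <= 1).
  { unfold Rdiv; split.
    - apply Rmult_le_pos; [lra | apply Rlt_le, Rinv_0_lt_compat, Hk].
    - rewrite <- (Rinv_r (INR (k i))) by lra.
      apply Rmult_le_compat_r; [apply Rlt_le, Rinv_0_lt_compat, Hk | lra]. }
  rewrite alpha_term, <- rpow_mult_distr by (lra || apply pos_INR).
  rewrite <- (Rmult_1_r (rpow (INR i * INR (k i)) (r / 2))) at 2.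
  apply Rmult_le_compat_l; [apply rpow_ge0 |].
  rewrite <- (rpow_1_l (r / p)).
  apply rpow_le_compat; [exact Hrp | lra].
Qed.

Lemma alpha_term_le_1 (l : nat) (y : R) :
  0 < INR l -> 0 < INR (k l) ->
  0 <= y <= rpow (INR (k l)) (1 - p / 2) / rpow (INR l) (p / 2) ->
  rpow (alpha p k l) r * rpow y (r / p) <= 1.
Proof.
  intros Hl Hk Hy.
  set (n := INR l * INR (k l)).
  assert (Hn : 0 < n) by (apply Rmult_lt_0_compat; assumption).
  assert (Hyk : y / INR (k l) <= rpow n (- (p / 2))).
  { replace (rpow n (- (p / 2)))
      with (rpow (INR (k l)) (1 - p / 2) / rpow (INR l) (p / 2) / INR (k l)).
    - apply Rmult_le_compat_r; [apply Rlt_le, Rinv_0_lt_compat, Hk | lra].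
    - pose proof (rpow_gt0 (INR l) (p / 2) Hl).
      pose proof (rpow_gt0 (INR (k l)) (p / 2) Hk).
      unfold n; rewrite rpow_Ropp, rpow_mult_distr by (exact Hn || lra).
      replace (1 - p / 2) with (1 + - (p / 2)) by ring.
      rewrite rpow_plus, rpow_Ropp, rpow_1 by exact Hk.
      field; lra. }
  rewrite alpha_term by lra; fold n.
  apply Rle_trans with (rpow n (r / 2) * rpow (rpow n (- (p / 2))) (r / p)).
  - apply Rmult_le_compat_l; [apply rpow_ge0 |].
    apply rpow_le_compat; [exact Hrp |].
    split; [| exact Hyk].
    apply Rmult_le_pos; [lra | apply Rlt_le, Rinv_0_lt_compat, Hk].
  - rewrite rpow_mult by lra.
    replace (- (p / 2) * (r / p)) with (- (r / 2)) by (field; lra).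
    rewrite rpow_Ropp, Rinv_r by (try apply Rgt_not_eq, rpow_gt0; exact Hn).
    lra.
Qed.

End AlphaTerm.

Theorem lemma7 (p r : R) (k : nat -> nat) :
  1 < p -> p < 2 -> 2 < r -> conj_exp r < p ->
  (forall n : nat, (1 <= n)%nat -> (0 < k n)%nat) ->
  (forall n : nat, (1 <= n)%nat ->
     1 + 2 * ssum (fun i => rpow (INR i) (r / 2) * rpow (INR (k i)) (r / 2)) (n - 1)
       <= rpow (INR (k n)) (1 - p / 2) / rpow (INR n) (p / 2)) ->
  (forall n : nat, (1 <= n)%nat ->
     rpow (INR (n + 1)%nat / INR n) (r / 2)
       * rpow (INR (k n) / INR (k (n + 1)%nat)) ((1 / p - 1 / conj_exp p) * r / 2)
       <= 1 / 2) ->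
  forall (l j : nat) (x : nat -> R),
    (1 <= l)%nat ->
    2 * ssum (fun i => rpow (INR i) (r / 2) * rpow (INR (k i)) (r / 2)) (l - 1) <= INR j ->
    INR j <= rpow (INR (k l)) (1 - p / 2) / rpow (INR l) (p / 2) ->
    (forall i : nat, (1 <= i)%nat -> (i < l)%nat -> 0 <= x i <= INR (k i)) ->
    0 <= x l <= INR j - ssum x (l - 1) ->
    0 <= ssum (fun i => rpow (alpha p k i) r * rpow (x i) (r / p)) l <= INR j / 2 + 2.
Proof.
  intros Hp1 Hp2 Hr _ Hk _ _ l j x Hl Hsum Hj Hx Hxl.
  set (f := fun i => rpow (alpha p k i) r * rpow (x i) (r / p)).
  assert (Hk_pos : forall i, (1 <= i)%nat -> 0 < INR (k i))
    by (intros i Hi; apply lt_0_INR, Hk, Hi).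
  split.
  - apply ssum_ge0; intros; apply Rmult_le_pos; apply rpow_ge0.
  - assert (Hsplit : ssum f l = ssum f (l - 1) + f l).
    { destruct l as [| l]; [lia |]. simpl; rewrite Nat.sub_0_r; reflexivity. }
    assert (Hfirst : ssum f (l - 1)
        <= ssum (fun i => rpow (INR i) (r / 2) * rpow (INR (k i)) (r / 2)) (l - 1)).
    { apply ssum_le; intros i Hi1 Hi2.
      apply alpha_term_le_block; [lra .. | apply Hk_pos; lia | apply Hx; lia]. }
    assert (Hprev : 0 <= ssum x (l - 1)) by (apply ssum_ge0; intros; apply Hx; lia).
    assert (Hlast : f l <= 1).
    { apply alpha_term_le_1; [lra .. | apply lt_0_INR; lia | apply Hk_pos, Hl | lra]. }
    lra.
Qed.
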